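(* Let $P$ be a finite poset, $\epsilon\in\{1,-1\}$ and $T^\xi$ ($\xi\in S^{(\epsilon)}$) a generator of $\omega^{(\epsilon)}$. Then $$\deg T^\xi\le\max\{q^{(\epsilon)}(x_0,y_0,\ldots,x_t,y_t): y_0,x_1,\ldots,y_{t-1},x_t \text{ is a } q^{(\epsilon)}\text{-reduced sequence satisfying condition N'},\ x_0=-\infty,\ y_t=\infty\}.$$
   Context: $P^\pm=P\cup\{-\infty,\infty\}$, $-\infty<z<\infty$ for $z\in P$; $P^-=P\cup\{-\infty\}$; $\xi^+(B)=\sum_{b\in B}\xi(b)$. Saturated chain: $x=z_0\lessdot\cdots\lessdot z_t=y$, length $t$. $q^{(\epsilon)}\mathrm{dist}(x,y)=\max\{\epsilon t:$ saturated chain of length $t$ from $x$ to $y$ in $P^\pm\}$. For $w_0<z_0>w_1<\cdots>w_s<z_s$ in $P^\pm$, $q^{(\epsilon)}(w_0,z_0,\ldots,w_s,z_s)=\sum_{\ell=0}^s q^{(\epsilon)}\mathrm{dist}(w_\ell,z_\ell)-\sum_{\ell=0}^{s-1}q^{(\epsilon)}\mathrm{dist}(w_{\ell+1},z_\ell)$. Condition N': $y_0>x_1<y_1>\cdots<y_{t-1}>x_t$ in $P$ and $y_i\not>x_j$ whenever $i\le j-2$ (empty sequence allowed, giving value $q^{(\epsilon)}\mathrm{dist}(-\infty,\infty)$). $q^{(\epsilon)}$-reduced: with $x_0=-\infty,y_t=\infty$, $q^{(\epsilon)}\mathrm{dist}(x_i,y_j)<q^{(\epsilon)}(x_i,y_i,\ldots,x_j,y_j)$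 whenever $0\le i<j\le t$ and $x_i<y_j$. $S^{(m)}=\{\xi\in\mathbb Z^{P^-}:\xi(x)\ge m\ \forall x\in P,\ \xi(-\infty)\ge\xi^+(C)+m$ for all maximal chains $C\}$. $R=\mathbb K[\mathcal C(P)]=\bigoplus_{S^{(0)}}\mathbb KT^\xi$ (Ehrhart ring of the chain polytope; $T^\xi=\prod T_x^{\xi(x)}$, $\deg T^\xi=\xi(-\infty)$), $\omega^{(1)}=\omega=\bigoplus_{S^{(1)}}\mathbb KT^\xi$ canonical ideal, $\omega^{(-1)}=R:\omega=\bigoplus_{S^{(-1)}}\mathbb KT^\xi$. A generator of $\omega^{(\epsilon)}$ is a monomial $T^\xi$, $\xi\in S^{(\epsilon)}$, not of the form $T^{\xi_1}T^{\xi_2}$ with $\xi_1\in S^{(0)}$, $\xi_1(-\infty)>0$, $\xi_2\in S^{(\epsilon)}$. *)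

From HB Require Import structures.
From mathcomp Require Import all_boot all_order all_algebra.
Set Implicit Arguments. Unset Strict Implicit. Unset Printing Implicit Defensive.
Import Order.TTheory GRing.Theory Num.Theory.

Section Ext.
Context {disp : Order.disp_t} (P : finPOrderType disp).

Inductive ext := NegInf | Elt of P | PosInf.

Definition ext_to (a : ext) : option (option P) :=
  match a with NegInf => None | Elt x => Some (Some x) | PosInf => Some None end.
Definition ext_of (o : option (option P)) : ext :=
  match o with None => NegInf | Some (Some x) => Elt x | Some None => PosInf end.
Lemma ext_toK : cancel ext_to ext_of. Proof. by case. Qed.

HB.instance Definition _ := Finite.copy ext (can_type ext_toK).

Definition ext_lt (a b : ext) : bool :=
  match a, b with
  | NegInf, NegInf => false
  | NegInf, _ => true
  | Elt x, Elt y => (x < y)%O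
  | Elt _, PosInf => true
  | _, _ => false
  end.

Definition ext_cov (a b : ext) : bool :=
  ext_lt a b && [forall c : ext, ~~ (ext_lt a c && ext_lt c b)].

Definition satchain (a b : ext) (t : nat) : bool :=
  [exists s : t.-tuple ext, path ext_cov a s && (last a s == b)].

(* max / min length of saturated chains from a to b (any saturated chain
   consists of distinct elements, so its length is < #|{: ext}|) *)
Definition maxlen (a b : ext) : nat :=
  \max_(t < #|{: ext}|.+1 | satchain a b t) t.
Definition minlen (a b : ext) : nat :=
  \big[minn/#|{: ext}|]_(t < #|{: ext}|.+1 | satchain a b t) t.

(* q^{(eps)}dist(a,b) = max { eps * t : saturated chain of length t from a to b } *)
Definition qdist (eps : int) (a b : ext) : int :=
  if (0 <= eps)%R then (eps * (maxlen a b)%:Z)%R else (eps * (minlen a b)%:Z)%R.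

(* A sequence y_0, x_1, ..., y_{t-1}, x_t of P is given by
   xs = [x_1; ...; x_t] and ys = [y_0; ...; y_{t-1}];
   with x_0 = -oo and y_t = +oo we get the following indexings. *)
Definition Xe (xs : seq P) (i : nat) : ext := nth NegInf (NegInf :: map Elt xs) i.
Definition Ye (ys : seq P) (i : nat) : ext := nth PosInf (map Elt ys) i.

Definition qseg (eps : int) (xs ys : seq P) (i j : nat) : int :=
  (\sum_(i <= l < j.+1) qdist eps (Xe xs l) (Ye ys l)
   - \sum_(i <= l < j) qdist eps (Xe xs l.+1) (Ye ys l))%R.

Definition condN (xs ys : seq P) : Prop :=
  let t := size xs in
  [/\ size ys = t,
      forall l, l < t -> ext_lt (Xe xs l.+1) (Ye ys l),
      forall l, 0 < l < t -> ext_lt (Xe xs l) (Ye ys l)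
    & forall i j, i.+2 <= j <= t -> ~~ ext_lt (Xe xs j) (Ye ys i)].

Definition qreduced (eps : int) (xs ys : seq P) : Prop :=
  forall i j, i < j <= size xs -> ext_lt (Xe xs i) (Ye ys j) ->
    (qdist eps (Xe xs i) (Ye ys j) < qseg eps xs ys i j)%R.

Definition is_chain (C : {set P}) : Prop :=
  forall x y, x \in C -> y \in C -> (x <= y)%O || (y <= x)%O.
Definition maxchain (C : {set P}) : Prop :=
  is_chain C /\ forall D : {set P}, is_chain D -> C \subset D -> D = C.

(* xi in Z^{P^-}: None stands for -oo, Some x for x in P *)
Definition inS (m : int) (xi : option P -> int) : Prop :=
  (forall x : P, (m <= xi (Some x))%R) /\
  (forall C : {set P}, maxchain C -> (\sum_(x in C) xi (Some x) + m <= xi None)%R).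

(* T^xi is a generator of omega^{(eps)}; T^xi1 T^xi2 = T^(xi1+xi2), deg T^xi = xi(-oo) *)
Definition generator (eps : int) (xi : option P -> int) : Prop :=
  inS eps xi /\
  ~ exists xi1 xi2 : option P -> int,
      [/\ inS 0 xi1, (0 < xi1 None)%R, inS eps xi2
        & forall z, xi z = (xi1 z + xi2 z)%R].

End Ext.

From HB Require Import structures.
From mathcomp Require Import all_boot all_order all_algebra.
From mathcomp Require Import zify ring lra.
From mathcomp Require Import boolp.
Import Order.TTheory GRing.Theory Num.Theory.

(* Maximal chains of P are the saturated chains -oo <. z_1 <. ... <. +oo of
   P^{+-} ("full paths").  Giving z in P the weight xi(z) - eps and every step
   the value eps, a full path is worth xi^+(C) + eps, so xi in S^(eps) says
   that no full path is worth more than xi(-oo); the full paths attaining this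
   bound are called tight.  The proof has four steps.
   1. Indecomposability: for every antichain A of elements with xi > eps some
      tight path avoids A (otherwise subtract the indicator of A, of degree 1).
   2. A hop x -> y is a tight path through x reaching y along weight-zero
      elements.  Applying 1 to the frontier of the elements reached by
      alternating sequences of hops -oo -> y_0 > x_1 -> y_1 > ... shows that
      such a sequence reaches +oo.
   3. Gluing tight paths along this sequence bounds xi(-oo) by q(x_0, ..., y_t).
   4. Deleting blocks of the sequence enforces condition N' and then
      q-reducedness without decreasing q(x_0, ..., y_t). *)

Set Implicit Arguments. Unset Strict Implicit. Unset Printing Implicit Defensive.

Section SaturatedChains.
Context {disp : Order.disp_t} (P : finPOrderType disp).
Local Notation ext := (ext P).
Local Notation ext_lt := (@ext_lt disp P).
Local Notation ext_cov := (@ext_cov disp P).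

Lemma ext_lt_irr : irreflexive ext_lt.
Proof. by case=> //= x; rewrite ltxx. Qed.

Lemma ext_lt_trans : transitive ext_lt.
Proof. by move=> [|y|] [|x|] [|z|] //=; apply: lt_trans. Qed.

Lemma cov_path_lt a s : path ext_cov a s -> path ext_lt a s.
Proof. by apply: sub_path => u v /andP[]. Qed.

Lemma cov_path_min a s : path ext_cov a s -> all (ext_lt a) s.
Proof. by move/cov_path_lt; apply: order_path_min; exact: ext_lt_trans. Qed.

Lemma cov_path_uniq a s : path ext_cov a s -> uniq (a :: s).
Proof. by move=> hp; apply: (sorted_uniq ext_lt_trans ext_lt_irr); exact: cov_path_lt. Qed.

Lemma cov_path_size a s : path ext_cov a s -> size s < #|{: ext}|.+1.
Proof.
move/cov_path_uniq/card_uniqP => hs.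
by have := max_card (mem (a :: s)); rewrite hs /=; lia.
Qed.

Lemma cov_path_last a s : path ext_cov a s -> s != [::] -> ext_lt a (last a s).
Proof.
move/cov_path_min => /allP hmin; case/lastP: s hmin => [//|s y] hmin _.
by rewrite last_rcons hmin // mem_rcons mem_head.
Qed.

Lemma cov_path_nil a s : path ext_cov a s -> last a s = a -> s = [::].
Proof.
move=> hp hl; apply/eqP; apply: contraT => /(cov_path_last hp).
by rewrite hl ext_lt_irr.
Qed.

Lemma cov_path_mem_last a s b : ext_lt a b -> last a s = b -> b \in s.
Proof.
move=> hab hl; have := mem_last a s; rewrite hl inE => /predU1P[hba|//].
by move: hab; rewrite hba ext_lt_irr.
Qed.

Lemma satchainP a b t :
  reflect (exists s, [/\ size s = t, path ext_cov a s & last a s = b]) (satchain a b t).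
Proof.
apply: (iffP existsP) => [[s /andP[hp /eqP hl]]|[s [hs hp hl]]].
  by exists (val s); rewrite size_tuple.
have hs' : size s == t by apply/eqP.
by exists (Tuple hs'); rewrite /= hp hl eqxx.
Qed.

Definition between (a b : ext) : pred ext := [pred c | ext_lt a c && ext_lt c b].

Lemma ext_covP a b : ext_lt a b -> between a b =1 xpred0 -> ext_cov a b.
Proof. by move=> hab h0; rewrite /ext_cov hab; apply/forallP => c; exact: negbT (h0 c). Qed.

Lemma between_lt a c b : ext_lt a c -> ext_lt c b ->
  #|between a c| < #|between a b| /\ #|between c b| < #|between a b|.
Proof.
move=> hac hcb; split; apply: proper_card; apply/properP; split.
- apply/subsetP => d; rewrite !inE => /andP[-> /= hdc]; exact: ext_lt_trans hdc hcb.
- by exists c; rewrite !inE ?hac ?hcb ?ext_lt_irr ?andbF.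
- apply/subsetP => d; rewrite !inE => /andP[hcd ->]; rewrite andbT; exact: ext_lt_trans hac hcd.
- by exists c; rewrite !inE ?hac ?hcb ?ext_lt_irr.
Qed.

Lemma exists_cov_path a b : ext_lt a b -> exists s, path ext_cov a s /\ last a s = b.
Proof.
have [n] := ubnP #|between a b|; elim: n a b => // n IH a b hn hab.
case: (pickP (between a b)) => [c /andP[hac hcb]|h0]; last first.
  by exists [:: b]; rewrite /= ext_covP.
have [hac_lt hcb_lt] := between_lt hac hcb.
have [s1 [p1 l1]] := IH a c (leq_trans hac_lt (ltnSE hn)) hac.
have [s2 [p2 l2]] := IH c b (leq_trans hcb_lt (ltnSE hn)) hcb.
by exists (s1 ++ s2); rewrite cat_path last_cat l1 p1 p2 l2.
Qed.

Lemma qdist_ub (eps : int) a b s :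
  eps = 1%R \/ eps = (-1)%R -> path ext_cov a s -> last a s = b ->
  (eps * (size s)%:Z <= qdist eps a b)%R.
Proof.
move=> heps hp hl; have hs := cov_path_size hp.
have hsat : satchain a b (Ordinal hs) by apply/satchainP; exists s.
case: heps => ->; rewrite /qdist /=.
  rewrite !mul1r lez_nat; exact: (leq_bigmax_cond (Ordinal hs) hsat).
rewrite !mulN1r lerN2 lez_nat /minlen -minEnat.
exact: (@bigmin_le_cond _ nat _ _ (Ordinal hs) _ (fun t => val t) hsat).
Qed.

Lemma qdist_att (eps : int) a b :
  eps = 1%R \/ eps = (-1)%R -> ext_lt a b ->
  exists s, [/\ path ext_cov a s, last a s = b & qdist eps a b = (eps * (size s)%:Z)%R].
Proof.
move=> heps hab; have [s0 [hp hl]] := exists_cov_path hab.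
have hsat : satchain a b (Ordinal (cov_path_size hp)) by apply/satchainP; exists s0.
have [t [hsatt ->]] : exists t : 'I_#|{: ext}|.+1, satchain a b t /\
    qdist eps a b = (eps * (val t)%:Z)%R.
  case: heps => ->; rewrite /qdist /=.
    rewrite /maxlen (bigop.bigmax_eq_arg (Ordinal (cov_path_size hp))) //.
    by case: arg_maxnP => // t ht _; exists t.
  rewrite /minlen -minEnat (bigmin_eq_arg _ (Ordinal (cov_path_size hp))) //.
    by case: arg_minP => // t ht _; exists t.
  by move=> t _; exact: ltnSE (ltn_ord t).
have [s [hs p l]] := satchainP _ _ _ hsatt.
by exists s; rewrite hs.
Qed.

End SaturatedChains.

Section MaximalChains.
Context {disp : Order.disp_t} (P : finPOrderType disp).
Local Notation ext := (ext P).
Local Notation ext_lt := (@ext_lt disp P).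
Local Notation ext_cov := (@ext_cov disp P).
Local Notation NI := (@NegInf disp P).
Local Notation PI := (@PosInf disp P).

Definition Cset (p : seq ext) : {set P} := [set x | Elt x \in p].

Definition full (p : seq ext) : bool := path ext_cov NI p && (last NI p == PI).

Lemma path_comparable a s u v : path ext_lt a s -> u \in s -> v \in s ->
  [\/ u = v, ext_lt u v | ext_lt v u].
Proof.
elim: s a => [//|h t IH] a /= /andP[_ hp].
have /allP hmin := order_path_min (@ext_lt_trans _ P) hp.
rewrite !inE => /predU1P[->|ut] /predU1P[->|vt]; first by constructor 1.
- by constructor 2; apply: hmin.
- by constructor 3; apply: hmin.
- exact: IH hp ut vt.
Qed.

Lemma cov_path_saturated a s v : path ext_cov a s -> ext_lt a v ->
  v = last a s \/ ext_lt v (last a s) ->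
  (forall u, u \in s -> [\/ u = v, ext_lt u v | ext_lt v u]) -> v \in s.
Proof.
elim: s a => [|h t IH] a /=.
  move=> _ hav [hva|hva]; first by rewrite hva ext_lt_irr in hav.
  by have := ext_lt_trans hav hva; rewrite ext_lt_irr.
move=> /andP[/andP[_ /forallP hcov] hp] hav hl hcomp.
rewrite inE; case: (hcomp h (mem_head _ _)) => [->|hhv|hvh]; first by rewrite eqxx.
  by rewrite (IH h hp hhv hl) ?orbT // => u ut; apply: hcomp; rewrite inE ut orbT.
by have := hcov v; rewrite hav hvh.
Qed.

Lemma full_maxchain p : full p -> maxchain (Cset p).
Proof.
move=> /andP[hp /eqP hl]; have hlt := cov_path_lt hp.
have hchain : is_chain (Cset p).
  move=> x y; rewrite !inE => hx hy.
  by case: (path_comparable hlt hx hy) => [[->]|/ltW->|/ltW->]; rewrite ?lexx ?orbT.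
split => // D hD /subsetP hsub; apply/setP => z; apply/idP/idP => [zD|/hsub //].
rewrite inE; apply: (cov_path_saturated hp) => //; first by rewrite hl; right.
case=> [|x|] hu; [by constructor 2|idtac|by constructor 3].
have xD : x \in D by apply: hsub; rewrite inE.
by case/orP: (hD x z xD zD); rewrite le_eqVlt => /predU1P[->|/= hlt'];
  [constructor 1|constructor 2|constructor 1|constructor 3].
Qed.

(* Every chain C of P lies on some saturated chain between any a < b
   enclosing it; induction on #|C|, splitting C at one of its elements. *)
Lemma chain_cov_path (C : {set P}) a b : is_chain C -> ext_lt a b ->
  (forall c, c \in C -> ext_lt a (Elt c) && ext_lt (Elt c) b) ->
  exists s, [/\ path ext_cov a s, last a s = b & forall c, c \in C -> Elt c \in s].
Proof.
have [n] := ubnP #|C|; elim: n C a b => // n IH C a b hn hC hab hin.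
case: (pickP (mem C)) => [c cC|C0]; last first.
  have [s [ps ls]] := exists_cov_path hab.
  by exists s; split => // c cC; have := C0 c; rewrite /= cC.
have /andP[hac hcb] := hin c cC.
have split_chain (Q : pred P) : Q c = false -> is_chain [set d in C | Q d] /\
    #|[set d in C | Q d]| < n.
  move=> Qc; split; first by move=> x y; rewrite !inE => /andP[+ _] /andP[+ _]; exact: hC.
  apply: leq_trans (ltnSE hn); apply: proper_card; apply/properP; split.
    by apply/subsetP => d; rewrite inE => /andP[].
  by exists c; rewrite // inE Qc andbF.
have [hL nL] := split_chain (fun d => (d < c)%O) (ltxx c).
have [hU nU] := split_chain (fun d => (c < d)%O) (ltxx c).
have inL d : d \in [set d in C | (d < c)%O] -> ext_lt a (Elt d) && ext_lt (Elt d) (Elt c).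
  by rewrite inE => /andP[dC /= ->]; rewrite andbT; case/andP: (hin d dC).
have inU d : d \in [set d in C | (c < d)%O] -> ext_lt (Elt c) (Elt d) && ext_lt (Elt d) b.
  by rewrite inE => /andP[dC /= ->]; case/andP: (hin d dC).
have [s1 [p1 l1 m1]] := IH _ a (Elt c) nL hL hac inL.
have [s2 [p2 l2 m2]] := IH _ (Elt c) b nU hU hcb inU.
exists (s1 ++ s2); rewrite cat_path p1 l1 p2 last_cat l1 l2; split => // d dC.
rewrite mem_cat; case/orP: (hC d c dC cC); rewrite le_eqVlt => /predU1P[hdc|hdc].
- by rewrite hdc (cov_path_mem_last hac l1).
- by rewrite m1 // inE dC.
- by rewrite -hdc (cov_path_mem_last hac l1).
- by rewrite m2 ?orbT // inE dC.
Qed.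

Lemma maxchain_full C : maxchain C -> exists2 p, full p & Cset p = C.
Proof.
move=> [hC hmax].
have [s [ps ls ms]] := chain_cov_path hC (isT : ext_lt NI PI) (fun c _ => isT).
have hfull : full s by rewrite /full ps ls eqxx.
exists s => //; apply: hmax; first by case: (full_maxchain hfull).
by apply/subsetP => c cC; rewrite inE ms.
Qed.

Definition unElt (u : ext) : option P := if u is Elt x then Some x else None.

Lemma unEltK : ocancel unElt (@Elt _ P). Proof. by case. Qed.

Lemma full_shape p : full p -> exists2 l : seq P, uniq l & p = rcons (map (@Elt _ P) l) PI.
Proof.
case/andP => hp /eqP hl; have := cov_path_uniq hp; rewrite cons_uniq => /andP[_ hu].
have /allP hmin := cov_path_min hp.
case/lastP: p hp hl hu hmin => [//|s z] _; rewrite last_rcons => -> hu hmin.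
have sElt : all (fun u => unElt u) s.
  apply/allP => -[|x|] us //.
    by have := hmin NI; rewrite mem_rcons inE us orbT ext_lt_irr => /(_ isT).
  by move: hu; rewrite rcons_uniq us.
exists (pmap unElt s).
  by apply: (pmap_uniq unEltK); move: hu; rewrite rcons_uniq => /andP[].
by rewrite (pmap_filter unEltK) (all_filterP sElt).
Qed.

Lemma Elt_inj : injective (@Elt _ P). Proof. by move=> x y []. Qed.

Lemma Cset_shape (l : seq P) : Cset (rcons (map (@Elt _ P) l) PI) = [set x in l].
Proof. by apply/setP => x; rewrite !inE mem_rcons inE /= (mem_map Elt_inj). Qed.

End MaximalChains.

Section TightPaths.
Context {disp : Order.disp_t} (P : finPOrderType disp).
Local Notation ext := (ext P).
Local Notation full := (@full disp P).
Local Notation Cset := (@Cset disp P).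
Variables (eps : int) (xi : option P -> int).

Definition weight (u : ext) : int := if u is Elt x then (xi (Some x) - eps)%R else 0%R.

(* For a full
   path with maximal chain C this is xi^+(C) + eps (full_pval), so xi in
   S^(eps) says exactly that no full path has value above xi(-oo). *)
Definition pval (p : seq ext) : int := (\sum_(u <- p) weight u + eps * (size p)%:Z)%R.

Lemma pval_cat s1 s2 : pval (s1 ++ s2) = (pval s1 + pval s2)%R.
Proof. by rewrite /pval big_cat /= size_cat PoszD mulrDr addrACA. Qed.

Lemma full_pval p : full p -> pval p = (\sum_(x in Cset p) xi (Some x) + eps)%R.
Proof.
case/full_shape => l ul ->; rewrite Cset_shape (eq_bigl (mem l)) => [|x]; last by rewrite inE.
rewrite -big_uniq //.
rewrite /pval -cats1 big_cat big_map big_seq1 /= addr0 size_cat size_map /=.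
elim: l {ul} => [|x l IH]; first by rewrite !big_nil mulr1 add0r.
by rewrite !big_cons /= -addn1 PoszD mulrDr mulr1; move: IH; lra.
Qed.

Definition tight (p : seq ext) : Prop := full p /\ pval p = xi None.

End TightPaths.

Section Generators.
Context {disp : Order.disp_t} (P : finPOrderType disp).
Local Notation ext := (ext P).
Local Notation ext_lt := (@ext_lt disp P).
Local Notation ext_cov := (@ext_cov disp P).
Variables (eps : int) (xi : option P -> int).
Local Notation weight := (weight eps xi).
Local Notation pval := (pval eps xi).
Local Notation tight := (tight eps xi).

Section InS.
Hypothesis xi_inS : inS eps xi.

Lemma weight_ge0 u : (0 <= weight u)%R.
Proof. by case: u => //= x; rewrite subr_ge0; case: xi_inS. Qed.

Lemma sum_weight_ge0 (s : seq ext) : (0 <= \sum_(u <- s) weight u)%R.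
Proof. by apply: sumr_ge0 => u _; apply: weight_ge0. Qed.

Lemma pval_cov_path x y s : path ext_cov x s -> ext_lt x y -> last x s = y ->
  (weight y + eps * (size s)%:Z <= pval s)%R.
Proof.
move=> hp hxy hl; rewrite /pval lerD2r.
case/lastP: s hp hl => [_ hl|s z _]; first by move: hxy; rewrite -hl ext_lt_irr.
by rewrite last_rcons => ->; rewrite -cats1 big_cat big_seq1 /= lerDr sum_weight_ge0.
Qed.

Lemma full_pval_le p : full p -> (pval p <= xi None)%R.
Proof. by move=> hp; rewrite full_pval //; apply: xi_inS.2; apply: full_maxchain. Qed.

End InS.

Definition antichain (A : {set P}) : Prop :=
  forall a b, a \in A -> b \in A -> (a <= b)%O -> a = b.

Lemma chain_antichain_sum (A C : {set P}) : antichain A -> is_chain C ->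
  (\sum_(x in C) (if x \in A then 1 else 0) =
   if [exists x in C, x \in A] then 1 else 0 :> int)%R.
Proof.
move=> hA hC; case: existsP => [[a /andP[aC aA]]|none].
  rewrite (bigD1 a aC) /= aA big1 ?addr0 // => x /andP[xC /eqP xa].
  case xA: (x \in A) => //; case/orP: (hC x a xC aC) => [hxa|hax]; first by case: xa; exact: hA.
  by case: xa; apply/esym; exact: hA.
rewrite big1 // => x xC; case xA: (x \in A) => //.
by case: none; exists x; rewrite xC xA.
Qed.

(* Key consequence of indecomposability: if T^xi is a generator, then for every
   antichain A of elements with xi > eps some tight path avoids A; otherwise
   xi = xi1 + (xi - xi1) with xi1 the indicator of A, of degree 1. *)
Lemma tight_path_avoiding (A : {set P}) : generator eps xi -> antichain A ->
  (forall a, a \in A -> (eps < xi (Some a))%R) ->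
  exists p, tight p /\ forall a, a \in A -> Elt a \notin p.
Proof.
move=> [hS hdec] hA hAgt; apply: contrapT => hmeet; apply: hdec.
pose xi1 (z : option P) : int := if z is Some x then (if x \in A then 1 else 0)%R else 1%R.
exists xi1, (fun z => xi z - xi1 z)%R; split => //; last by move=> z; rewrite addrC subrK.
- split => [x|C [hC _]]; first by rewrite /xi1; case: (x \in A).
  by rewrite addr0 (chain_antichain_sum hA hC); case: existsP.
- split => [x|C hC].
    rewrite /xi1; case xA: (x \in A); last by rewrite subr0; exact: hS.1.
    by rewrite lerBrDr lezD1; exact: hAgt.
  rewrite sumrB (chain_antichain_sum hA hC.1) /=; case: existsP => [_|none].
    by rewrite /xi1 addrAC lerD2r; exact: hS.2.
  have [p hp pC] := maxchain_full hC.
  have hlt : (pval p < xi None)%R.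
    rewrite lt_neqAle full_pval_le // andbT; apply/eqP => hval; apply: hmeet.
    exists p; split => // a aA; apply/negP => ap; apply: none.
    by exists a; rewrite aA andbT -pC inE.
  by rewrite /xi1 subr0 lerBrDr lezD1 -pC -full_pval.
Qed.

End Generators.

Section AlternatingSequences.
Context {disp : Order.disp_t} (P : finPOrderType disp).
Local Notation ext := (ext P).
Local Notation ext_lt := (@ext_lt disp P).
Local Notation NI := (@NegInf disp P).
Local Notation PI := (@PosInf disp P).

(* y_l with the last element y_t = y supplied separately (Ye ys = Yv ys PI). *)
Definition Yv (ys : seq P) (y : ext) (l : nat) : ext := nth y (map (@Elt _ P) ys) l.

Definition alternating (R : ext -> ext -> Prop) (xs ys : seq P) (y : ext) : Prop :=
  [/\ size ys = size xs, forall l, l <= size xs -> R (Xe xs l) (Yv ys y l)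
    & forall l, l < size xs -> ext_lt (Xe xs l.+1) (Yv ys y l)].

Lemma Xe_rcons (xs : seq P) x l : l <= size xs -> Xe (rcons xs x) l = Xe xs l.
Proof. by move=> hl; rewrite /Xe map_rcons -rcons_cons nth_rcons /= size_map ltnS hl. Qed.

Lemma Xe_rcons_last (xs : seq P) x : Xe (rcons xs x) (size xs).+1 = Elt x.
Proof. by rewrite /Xe map_rcons -rcons_cons nth_rcons /= size_map ltnn eqxx. Qed.

Lemma Yv_rcons (ys : seq P) yy y l : l <= size ys -> Yv (rcons ys yy) y l = Yv ys (Elt yy) l.
Proof.
move=> hl; rewrite /Yv map_rcons nth_rcons size_map.
case: ltngtP hl => // [hlt|->] _; first by apply: set_nth_default; rewrite size_map.
by rewrite nth_default // size_map.
Qed.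

Lemma Yv_rcons_last (ys : seq P) yy y : Yv (rcons ys yy) y (size ys).+1 = y.
Proof. by rewrite /Yv nth_default // size_map size_rcons. Qed.

Lemma alternating_nil R y : R NI y -> alternating R [::] [::] y.
Proof. by move=> hR; split => // l; rewrite leqn0 => /eqP ->. Qed.

Lemma alternating_rcons R (xs ys : seq P) yy x y :
  alternating R xs ys (Elt yy) -> ext_lt (Elt x) (Elt yy) -> R (Elt x) y ->
  alternating R (rcons xs x) (rcons ys yy) y.
Proof.
move=> [hs hR hlt] hxy hxR; split; first by rewrite !size_rcons hs.
  move=> l; rewrite size_rcons leq_eqVlt ltnS => /predU1P[->|hl].
    by rewrite Xe_rcons_last -hs Yv_rcons_last.
  by rewrite Xe_rcons // Yv_rcons ?hs //; apply: hR.
move=> l; rewrite size_rcons ltnS leq_eqVlt => /predU1P[->|hl].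
  by rewrite Xe_rcons_last Yv_rcons ?hs // /Yv nth_default // size_map hs.
by rewrite Xe_rcons // Yv_rcons ?hs 1?ltnW //; apply: hlt.
Qed.

Definition cut (s : seq P) (n d : nat) : seq P := take n s ++ drop (n + d) s.

Lemma size_cut (s : seq P) n d : n + d <= size s -> size (cut s n d) = size s - d.
Proof. by move=> h; rewrite /cut size_cat size_takel ?size_drop; lia. Qed.

Lemma Xe_cut (xs : seq P) n d l : n + d <= size xs ->
  Xe (cut xs n d) l = Xe xs (if l <= n then l else l + d).
Proof.
move=> h; case: l => [//|l]; rewrite /Xe /cut /= map_cat map_take map_drop.
rewrite nth_cat size_takel ?size_map; last lia.
case: ltnP => hl; first by rewrite nth_take.
by rewrite nth_drop addSn /=; congr nth; lia.
Qed.

Lemma Yv_cut (ys : seq P) y n d l : n + d <= size ys ->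
  Yv (cut ys n d) y l = Yv ys y (if l < n then l else l + d).
Proof.
move=> h; rewrite /Yv /cut map_cat map_take map_drop.
rewrite nth_cat size_takel ?size_map; last lia.
case: ltnP => hl; first by rewrite nth_take.
by rewrite nth_drop; congr nth; lia.
Qed.

Lemma Ye_cut (ys : seq P) n d l : n + d <= size ys ->
  Ye (cut ys n d) l = Ye ys (if l < n then l else l + d).
Proof. exact: Yv_cut. Qed.

(* Condition N' can always be enforced: if y_i > x_j with i + 2 <= j, delete
   x_{i+1}, ..., x_{j-1} and y_{i+1}, ..., y_{j-1}, which keeps the sequence
   alternating (y_i > x_j now become neighbours) and shortens it. *)
Lemma alternating_condN (R : ext -> ext -> Prop) : (forall x y, R x y -> ext_lt x y) ->
  forall xs ys, alternating R xs ys PI ->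
  exists xs' ys', alternating R xs' ys' PI /\ condN xs' ys'.
Proof.
move=> Rlt xs ys; have [n] := ubnP (size xs); elim: n xs ys => // n IH xs ys hn halt.
have [hs hR hlt] := halt.
case: (pselect (exists i j, i.+2 <= j <= size xs /\ ext_lt (Xe xs j) (Ye ys i))); last first.
  move=> none; exists xs, ys; split => //; split => //.
  - by move=> l /andP[_ hl]; apply: Rlt; apply: hR; exact: ltnW.
  - by move=> i j hij; apply/negP => hji; apply: none; exists i, j.
case=> i [j [/andP[hij hjt] hji]].
pose d := j - i.+1.
have hdx : i + d <= size xs by lia.
have hdy : i.+1 + d <= size ys by lia.
apply: (IH (cut xs i d) (cut ys i.+1 d)); first by rewrite size_cut //; lia.
split; first by rewrite !size_cut // hs.
  move=> l; rewrite size_cut // => hl; rewrite Xe_cut // Yv_cut // ltnS.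
  by case: leqP => hli; apply: hR; lia.
move=> l; rewrite size_cut // => hl; rewrite Xe_cut // Yv_cut // ltnS.
case: (ltngtP l i) => [hli|hil|->].
- by apply: hlt; lia.
- by rewrite addSn; apply: hlt; lia.
- by rewrite (_ : i.+1 + d = j) //; lia.
Qed.

End AlternatingSequences.

Section Hops.
Context {disp : Order.disp_t} (P : finPOrderType disp).
Local Notation ext := (ext P).
Local Notation ext_lt := (@ext_lt disp P).
Local Notation NI := (@NegInf disp P).
Local Notation PI := (@PosInf disp P).
Variables (eps : int) (xi : option P -> int).
Local Notation weight := (weight eps xi).
Local Notation tight := (tight eps xi).

Definition hop (x y : ext) : Prop := exists a m b : seq ext,
  [/\ tight (a ++ rcons m y ++ b), last NI a = x & all (fun z => weight z == 0%R) m].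

Lemma hop_lt x y : hop x y -> ext_lt x y.
Proof.
case=> a [m [b [[/andP[+ _] _] hx _]]]; rewrite !cat_path hx => /and3P[_ pm _].
by have := cov_path_last pm; rewrite last_rcons; apply; case: m {pm}.
Qed.

Definition reach (y : ext) : Prop := exists xs ys, alternating hop xs ys y.

Definition below_reach (z : ext) : Prop := z = NI \/ exists2 y, reach y & ext_lt z y.

Lemma below_reach_PI : ~ below_reach PI.
Proof. by case=> [//|[[|y|] _]]. Qed.

Lemma reach_hop z y : ~ reach PI -> below_reach z -> hop z y -> reach y.
Proof.
move=> noPI hz hhop; case: z hz hhop => [|x|] hz hhop; last by case: below_reach_PI.
  by exists [::], [::]; apply: alternating_nil.
case: hz => [//|[[|yy|] [xs [ys halt]] hxy]] //; last by case: noPI; exists xs, ys.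
by exists (rcons xs x), (rcons ys yy); apply: alternating_rcons.
Qed.

(* Walking along a tight path: starting below a reached element, follow the
   path until the next element of nonzero weight (or +oo); this is a hop, so
   that element is reached.  If every reached element of the path with
   xi > eps lies below a reached element, the walk never stops, yet the path
   ends at +oo, which is therefore reached. *)
Lemma tight_walk p : inS eps xi -> ~ reach PI -> tight p ->
  (forall a, Elt a \in p -> (eps < xi (Some a))%R -> reach (Elt a) -> below_reach (Elt a)) ->
  False.
Proof.
move=> xi_inS noPI [hfull hval] hfront.
suff walk n a c : size c < n -> p = a ++ c -> below_reach (last NI a) -> False.
  by apply: (walk (size p).+1 [::] p) => //; left.
elim: n a c => // n IH a c hn hp hx.
pose stop z := (weight z != 0%R) || (z == PI).
have hstop : has stop c.
  apply/hasP; exists PI; last by rewrite /stop eqxx orbT.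
  have /andP[_ /eqP] := hfull; rewrite hp last_cat.
  case: c {hn} hp => [_ hl|u c _ <-] /=; last exact: mem_last.
  by case: below_reach_PI; rewrite -hl.
move: hp hn; case: (split_find hstop) => v m c' stop_v no_stop hp hn.
have hhop : hop (last NI a) v.
  exists a, m, c'; split => //; first by rewrite -hp.
  apply/allP => z zm; have := hasPn no_stop z zm.
  by rewrite /stop negb_or => /andP[/negPn].
have rv := reach_hop noPI hx hhop.
case: v stop_v hhop rv hp hn => [|x|] stop_x _ rx hp hn; last exact: noPI.
  by rewrite /stop in stop_x.
have xp : Elt x \in p by rewrite hp mem_cat mem_cat mem_rcons mem_head orbT.
have hgt : (eps < xi (Some x))%R.
  move: stop_x; rewrite /stop orbF /= => hne.
  by have := weight_ge0 xi_inS (Elt x); rewrite /= le_eqVlt eq_sym (negbTE hne) subr_gt0.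
apply: (IH (a ++ rcons m (Elt x)) c').
- by move: hn; rewrite size_cat size_rcons; lia.
- by rewrite hp catA.
- by rewrite last_cat last_rcons; apply: hfront.
Qed.

(* For a generator, +oo is reached: otherwise the reached elements with
   xi > eps lying below no reached element form an antichain, a tight path
   avoids it (tight_path_avoiding), and walking along it reaches +oo. *)
Lemma reach_PI : generator eps xi -> reach PI.
Proof.
move=> gen; apply: contrapT => noPI.
pose A := [set a | `[< ~ below_reach (Elt a) /\ (eps < xi (Some a))%R /\ reach (Elt a) >]].
have antiA : antichain A.
  move=> a b; rewrite !inE => /asboolP[na _] /asboolP[_ [_ rb]].
  rewrite le_eqVlt => /predU1P[//|hab].
  by case: na; right; exists (Elt b).
have [p [tp avoid]] : exists p, tight p /\ forall a, a \in A -> Elt a \notin p.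
  by apply: tight_path_avoiding => // a; rewrite inE => /asboolP[_ []].
apply: (tight_walk gen.1 noPI tp) => a ap hgt ra; apply: contrapT => nb.
have aA : a \in A by rewrite inE; apply/asboolP.
by move: (avoid a aA); rewrite ap.
Qed.

End Hops.

Section AlternatingSums.

Definition altsum (F G : nat -> int) (i j : nat) : int :=
  (\sum_(i <= l < j.+1) F l - \sum_(i <= l < j) G l)%R.

Lemma altsum_step F G i k : i <= k ->
  altsum F G i k.+1 = (altsum F G i k + F k.+1 - G k)%R.
Proof.
move=> hik; rewrite /altsum (big_nat_recr k.+1 _ F (leqW hik)).
by rewrite (big_nat_recr k _ G hik) /=; ring.
Qed.

Lemma sum_shift (F : nat -> int) m n d :
  (\sum_(m <= l < n) F (l + d) = \sum_(m + d <= l < n + d) F l)%R.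
Proof. by rewrite big_addn addnK. Qed.

Lemma altsum_cut (F G F' G' : nat -> int) i d t :
  (forall l, l < i -> F' l = F l) -> (forall l, l < i -> G' l = G l) ->
  (forall l, i < l -> F' l = F (l + d)) -> (forall l, i <= l -> G' l = G (l + d)) ->
  i <= t ->
  altsum F' G' 0 t = (altsum F G 0 (t + d) - altsum F G i (i + d) + F' i)%R.
Proof.
move=> hF1 hG1 hF2 hG2 hit; rewrite /altsum.
have eF' : (\sum_(0 <= l < t.+1) F' l = \sum_(0 <= l < i) F l + F' i
            + \sum_((i + d).+1 <= l < (t + d).+1) F l)%R.
  rewrite (big_cat_nat (leq0n i) (leqW hit)) (big_ltn (F := F') (hit : i < t.+1)) /= addrA.
  congr (_ + _ + _)%R; first by apply: eq_big_nat => l /andP[_ /hF1].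
  by rewrite -!addSn -sum_shift; apply: eq_big_nat => l /andP[/hF2 + _].
have eG' : (\sum_(0 <= l < t) G' l = \sum_(0 <= l < i) G l + \sum_(i + d <= l < t + d) G l)%R.
  rewrite (big_cat_nat (leq0n i) hit) /=; congr (_ + _)%R.
    by apply: eq_big_nat => l /andP[_ /hG1].
  by rewrite -sum_shift; apply: eq_big_nat => l /andP[/hG2 + _].
have h1 : i <= (i + d).+1 by lia.
have h2 : (i + d).+1 <= (t + d).+1 by lia.
have h3 : i <= i + d by lia.
have h4 : i + d <= t + d by lia.
rewrite eF' eG' (big_cat_nat (F := F) (leq0n i) (leq_trans h1 h2)) (big_cat_nat (F := F) h1 h2).
by rewrite (big_cat_nat (F := G) (leq0n i) (leq_trans h3 h4)) (big_cat_nat (F := G) h3 h4) /=; ring.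
Qed.

End AlternatingSums.

Lemma qsegE {disp : Order.disp_t} (P : finPOrderType disp) eps (xs ys : seq P) i j :
  qseg eps xs ys i j =
  altsum (fun l => qdist eps (Xe xs l) (Ye ys l)) (fun l => qdist eps (Xe xs l.+1) (Ye ys l)) i j.
Proof. by []. Qed.

Section HopBound.
Context {disp : Order.disp_t} (P : finPOrderType disp).
Local Notation ext_lt := (@ext_lt disp P).
Local Notation ext_cov := (@ext_cov disp P).
Local Notation NI := (@NegInf disp P).
Local Notation PI := (@PosInf disp P).
Variables (eps : int) (xi : option P -> int).
Hypothesis heps : eps = 1%R \/ eps = (-1)%R.
Hypothesis xi_inS : inS eps xi.
Local Notation weight := (weight eps xi).
Local Notation pval := (pval eps xi).
Local Notation hop := (hop eps xi).

(* A hop x -> y splits its tight path into a saturated chain a from -oo to x, a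
   weight-zero chain from x to y, which is worth at most qdist(x, y) + weight y,
   and a saturated chain b from y to +oo. *)
Lemma hop_split x y : hop x y -> exists a b,
  [/\ path ext_cov NI a, last NI a = x, path ext_cov y b, last y b = PI &
      (xi None <= pval a + qdist eps x y + weight y + pval b)%R].
Proof.
case=> a [m [b [[/andP[hp /eqP hl] hval] hx hm]]].
move: hp; rewrite !cat_path hx => /and3P[pa pm pb].
rewrite !last_cat hx last_rcons in hl pb.
exists a, b; split => //.
have hmid : (pval (rcons m y) <= qdist eps x y + weight y)%R.
  have hsm : (\sum_(u <- m) weight u = 0)%R.
    by rewrite big_seq big1 // => u /(allP hm) /eqP.
  move: (qdist_ub heps pm (last_rcons x m y)).
  by rewrite /pval -cats1 big_cat /= big_seq1 hsm add0r; lia.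
by move: hmid; rewrite -hval !pval_cat; lia.
Qed.

Lemma qseg_step (xs ys : seq P) k : qseg eps xs ys 0 k.+1 =
  (qseg eps xs ys 0 k + qdist eps (Xe xs k.+1) (Ye ys k.+1) - qdist eps (Xe xs k.+1) (Ye ys k))%R.
Proof. exact: altsum_step. Qed.

(* The step glues the chain of the hop at k+1 up to x_{k+1}, a chain from
   x_{k+1} to y_k realizing qdist, and b; this full path is worth at most xi(-oo). *)
Lemma alternating_hop_prefix (xs ys : seq P) : alternating hop xs ys PI ->
  forall k, k <= size xs -> exists b, [/\ path ext_cov (Ye ys k) b, last (Ye ys k) b = PI &
    (xi None <= qseg eps xs ys 0 k + weight (Ye ys k) + pval b)%R].
Proof.
move=> [_ hhop0 hlt0].
(* Yv ys PI is Ye ys; restate so that the terms below share their atoms. *)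
have hhop : forall l, l <= size xs -> hop (Xe xs l) (Ye ys l) := hhop0.
have hlt : forall l, l < size xs -> ext_lt (Xe xs l.+1) (Ye ys l) := hlt0.
elim=> [|k IH] hk.
  have [a [b [pa la pb lb hb]]] := hop_split (hhop 0 isT).
  exists b; split => //; move: hb; rewrite (cov_path_nil pa la).
  by rewrite /qseg big_nat1 big_geq // subr0 /pval big_nil /= mulr0 !addr0 add0r.
have [b0 [pb0 lb0 hb0]] := IH (ltnW hk).
have [s [ps ls qs]] := qdist_att heps (hlt k hk).
have [a1 [b1 [pa1 la1 pb1 lb1 hb1]]] := hop_split (hhop k.+1 hk).
have hfull : full (a1 ++ s ++ b0).
  by rewrite /full !cat_path !last_cat la1 pa1 ps ls pb0 lb0 eqxx.
have hle := full_pval_le xi_inS hfull.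
have hs_ge := pval_cov_path xi_inS ps (hlt k hk) ls.
have ha1 : (pval a1 <= qseg eps xs ys 0 k - qdist eps (Xe xs k.+1) (Ye ys k))%R.
  by move: hle hs_ge hb0; rewrite !pval_cat qs; lia.
by exists b1; split => //; rewrite qseg_step; lia.
Qed.

Lemma alternating_hop_bound (xs ys : seq P) : alternating hop xs ys PI ->
  (xi None <= qseg eps xs ys 0 (size xs))%R.
Proof.
move=> halt; have [hs _ _] := halt.
have [b [pb lb hb]] := alternating_hop_prefix halt (leqnn _).
have hY : Ye ys (size xs) = PI by rewrite /Ye nth_default // size_map hs.
rewrite hY in pb lb hb; move: hb; rewrite (cov_path_nil pb lb).
by rewrite /pval big_nil /= mulr0 !addr0.
Qed.

End HopBound.

Section Reduction.
Context {disp : Order.disp_t} (P : finPOrderType disp).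
Local Notation ext_lt := (@ext_lt disp P).
Variable eps : int.

Lemma condN_cut (xs ys : seq P) i j : condN xs ys -> i < j <= size xs ->
  ext_lt (Xe xs i) (Ye ys j) -> condN (cut xs i (j - i)) (cut ys i (j - i)).
Proof.
case=> hs hcr hdg hinc /andP[hij hjt] hlt.
have hdx : i + (j - i) <= size xs by lia.
have hdy : i + (j - i) <= size ys by lia.
have ht : size (cut xs i (j - i)) = size xs - (j - i) by rewrite size_cut.
split; first by rewrite !size_cut // hs.
- move=> l; rewrite ht => hl; rewrite Xe_cut // Ye_cut //.
  by case: (ltnP l i) => hli; rewrite ?addSn; apply: hcr; lia.
- move=> l; rewrite ht => /andP[hl0 hl]; rewrite Xe_cut // Ye_cut //.
  case: (ltngtP l i) => [hli|hil|->]; try by apply: hdg; lia.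
  by rewrite subnKC // ltnW.
- move=> i1 j1; rewrite ht => /andP[h1 h2]; rewrite Xe_cut // Ye_cut //.
  by case: (leqP j1 i) => h3; case: (ltnP i1 i) => h4; apply: hinc; lia.
Qed.

Lemma qseg_cut (xs ys : seq P) i j : i < j <= size xs -> size ys = size xs ->
  qseg eps (cut xs i (j - i)) (cut ys i (j - i)) 0 (size xs - (j - i)) =
  (qseg eps xs ys 0 (size xs) - qseg eps xs ys i j + qdist eps (Xe xs i) (Ye ys j))%R.
Proof.
move=> /andP[hij hjt] hs; set d := j - i.
have hdx : i + d <= size xs by lia.
have hdy : i + d <= size ys by lia.
have hij' : i + d = j by rewrite subnKC // ltnW.
rewrite !qsegE (altsum_cut (F := fun l => qdist eps (Xe xs l) (Ye ys l))
  (G := fun l => qdist eps (Xe xs l.+1) (Ye ys l)) (i := i) (d := d)) /=.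
- by rewrite subnK ?hij' ?Xe_cut ?Ye_cut // ?leqnn ?ltnn ?hij' //; lia.
- by move=> l hl; rewrite Xe_cut // Ye_cut // (ltnW hl) hl.
- by move=> l hl; rewrite Xe_cut // Ye_cut // hl.
- by move=> l hl; rewrite Xe_cut // Ye_cut // leqNgt hl ltnNge (ltnW hl).
- by move=> l hl; rewrite Xe_cut // Ye_cut // ltnNge hl addSn.
- lia.
Qed.

(* Any N'-sequence can be made q-reduced without decreasing q(x_0, ..., y_t):
   a violation q(x_i, ..., y_j) <= qdist(x_i, y_j) is removed by condN_cut. *)
Lemma reduce (D : int) (xs ys : seq P) : condN xs ys ->
  (D <= qseg eps xs ys 0 (size xs))%R ->
  exists xs' ys' : seq P,
    [/\ condN xs' ys', qreduced eps xs' ys' & (D <= qseg eps xs' ys' 0 (size xs'))%R].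
Proof.
have [n] := ubnP (size xs); elim: n xs ys => // n IH xs ys hn hN hD.
case: (pselect (qreduced eps xs ys)) => [hr|hnr]; first by exists xs, ys.
have [i [j [hij hlt hle]]] : exists i j, [/\ i < j <= size xs, ext_lt (Xe xs i) (Ye ys j)
    & (qseg eps xs ys i j <= qdist eps (Xe xs i) (Ye ys j))%R].
  apply: contrapT => none; apply: hnr => i j hij hl; rewrite ltNge; apply/negP => hle.
  by apply: none; exists i, j.
have hs : size ys = size xs by case: hN.
have /andP[_ hjt] := hij.
apply: (IH (cut xs i (j - i)) (cut ys i (j - i))); rewrite ?size_cut; try lia.
- exact: condN_cut.
- by rewrite qseg_cut //; apply: (le_trans hD); rewrite -addrA lerDl addrC subr_ge0.
Qed.

End Reduction.

Theorem mainTheorem9 (disp : Order.disp_t) (P : finPOrderType disp) (eps : int)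
  (Heps : eps = 1%R \/ eps = (-1)%R) (xi : option P -> int) :
  generator eps xi ->
  exists xs ys : seq P,
    [/\ condN xs ys, qreduced eps xs ys & (xi None <= qseg eps xs ys 0 (size xs))%R].
Proof.
move=> gen.
have [xs [ys halt]] := reach_PI gen.
have [xs1 [ys1 [halt1 hN1]]] := alternating_condN (@hop_lt _ _ eps xi) halt.
have hbound := alternating_hop_bound Heps gen.1 halt1.
have [xs2 [ys2 [hN2 hred hbound2]]] := reduce hN1 hbound.
by exists xs2, ys2.
Qed.
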